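(* Let $\gamma\in\mathbb{R}$, $d>0$, and let $I:\mathbb{R}\to\mathbb{R}$ be a continuous $2\pi$-periodic function. Consider the system on the two-torus $(\mathbb{R}/2\pi\mathbb{Z})^2$ $$\dot\phi_1=\gamma-\sin\phi_1+d\,I(\phi_2),\qquad \dot\phi_2=\gamma-\sin\phi_2+d\,I(\phi_1).$$ Its equilibria are of two types: those on the diagonal $\phi_1=\phi_2$ (first type) and those off the diagonal (second type), the latter occurring in symmetric pairs $(a,b)$, $(b,a)$. If the system has an equilibrium of the second type, i.e. an equilibrium $(a,b)$ with $a\neq b$ (mod $2\pi$), then it also has an equilibrium of the first type, i.e. there exists $\xi$ with $\gamma-\sin\xi+d\,I(\xi)=0$. *)

From Stdlib Require Export Reals.
Open Scope R_scope.

Definition field1 (gamma d : R) (I : R -> R) (p1 p2 : R) : R :=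
  gamma - sin p1 + d * I p2.

(* (p1,p2) is an equilibrium of the system (angles represented by reals). *)
Definition is_equilibrium (gamma d : R) (I : R -> R) (p1 p2 : R) : Prop :=
  field1 gamma d I p1 p2 = 0 /\ field1 gamma d I p2 p1 = 0.

Definition eq_mod_2pi (a b : R) : Prop := exists k : Z, a - b = 2 * PI * IZR k.

(* Along the diagonal the vector field is g(x) = gamma - sin x + d I(x).  If
   (a, b) is an equilibrium then gamma + d I(b) = sin a and gamma + d I(a) = sin b,
   so g(a) = sin b - sin a = - g(b); by the intermediate value theorem g vanishes
   between a and b, which gives an equilibrium on the diagonal. *)
From Stdlib Require Import Reals Lra.
Open Scope R_scope.

Lemma IVT_opposite_values (f : R -> R) (a b : R) :
  continuity f -> f b = - f a -> exists z, f z = 0.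
Proof.
  intros hf hba.
  assert (hprod : f a * f b <= 0).
  { rewrite hba. pose proof (Rle_0_sqr (f a)) as hsq. unfold Rsqr in hsq. lra. }
  destruct (Rle_dec a b) as [hab | hba'].
  - destruct (IVT_cor f a b hf hab hprod) as [z [_ hz]]. now exists z.
  - rewrite Rmult_comm in hprod.
    destruct (IVT_cor f b a hf ltac:(lra) hprod) as [z [_ hz]]. now exists z.
Qed.

Lemma continuity_field1_diag (gamma d : R) (I : R -> R) :
  continuity I -> continuity (fun x => field1 gamma d I x x).
Proof.
  intros hI. unfold field1.
  apply continuity_plus.
  - apply continuity_minus; [apply continuity_const; now intros u v | apply continuity_sin].
  - now apply continuity_scal.
Qed.

Lemma field1_diag_equilibrium (gamma d : R) (I : R -> R) (a b : R) :
  is_equilibrium gamma d I a b -> field1 gamma d I a a = sin b - sin a.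
Proof. unfold is_equilibrium, field1. lra. Qed.

Theorem mainTheorem2 (gamma d : R) (I : R -> R)
  (hd : 0 < d) (hI : continuity I) (hper : forall x, I (x + 2 * PI) = I x) :
  (exists a b, is_equilibrium gamma d I a b /\ ~ eq_mod_2pi a b) ->
  exists xi, is_equilibrium gamma d I xi xi.
Proof.
  intros [a [b [heq _]]].
  assert (hsym : is_equilibrium gamma d I b a) by (destruct heq; now split).
  assert (hopp : field1 gamma d I b b = - field1 gamma d I a a).
  { rewrite (field1_diag_equilibrium _ _ _ _ _ heq),
            (field1_diag_equilibrium _ _ _ _ _ hsym). ring. }
  destruct (IVT_opposite_values _ a b (continuity_field1_diag gamma d I hI) hopp)
    as [xi hxi].
  now exists xi; split.
Qed.
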